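(* Let $k\ge2$ be an integer and let $D$ be a digraph of order $n$ with no isolated vertex. Then $\gamma_{trk}(D)=k$ if and only if one of the following holds: (a) $n=k$; (b) $n\ge k+1$ and there exists a set $X=\{v_1,\dots,v_t\}\subseteq V(D)$ with $2\le t\le k$ such that the induced subdigraph $D[X]$ has no isolated vertex and $V(D)\setminus X\subseteq N^+(v_i)$ for every $1\le i\le t$.
   Context: All digraphs are finite, with no loops or multiple arcs (pairs of opposite arcs are allowed). $N^-(v)$, $N^+(v)$ denote the in- and out-neighborhoods of $v$; $D[X]$ is the subdigraph induced by $X$. A vertex is isolated if it has no in-neighbor and no out-neighbor. For a positive integer $k$, a $k$-rainbow dominating function ($k$RDF) on $D$ is a function $f:V(D)\to\mathcal P(\{1,\dots,k\})$ such that every $v$ with $f(v)=\emptyset$ satisfies $\bigcup_{u\in N^-(v)}f(u)=\{1,\dots,k\}$; its weight is $\omega(f)=\sum_v|f(v)|$. If $D$ has no isolated vertex, a total $k$RDF (T$k$RDF) is a $k$RDF $f$ such that the subdigraph induced by $\{v:f(v)\ne\emptyset\}$ has no isolated vertex; $\gamma_{trk}(D)$ is the minimum weight of a T$k$RDF. *)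

(* A digraph on a finite vertex type T is an arc relation
   a : rel T (a u v = arc u -> v); looplessness is a hypothesis (irreflexive a).
   Colours {1,..,k} are represented by 'I_k. *)
From mathcomp Require Import all_boot.
Set Implicit Arguments. Unset Strict Implicit. Unset Printing Implicit Defensive.

Section Digraph.
Variables (T : finType) (a : rel T).

Definition in_nbhd (v : T) : {set T} := [set u | a u v].
Definition out_nbhd (v : T) : {set T} := [set w | a v w].

Definition nonisolated_in (S : {set T}) (v : T) : bool :=
  [exists u in S, a u v || a v u].

Definition no_isolated : bool := [forall v, nonisolated_in [set: T] v].

Definition induced_no_isolated (S : {set T}) : bool :=
  [forall v in S, nonisolated_in S v].

Variable k : nat.

Definition is_kRDF (f : {ffun T -> {set 'I_k}}) : bool :=
  [forall v, (f v == set0) ==> (\bigcup_(u in in_nbhd v) f u == [set: 'I_k])].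

Definition support (f : {ffun T -> {set 'I_k}}) : {set T} :=
  [set v | f v != set0].

Definition is_TkRDF (f : {ffun T -> {set 'I_k}}) : bool :=
  is_kRDF f && induced_no_isolated (support f).

Definition weight (f : {ffun T -> {set 'I_k}}) : nat := \sum_v #|f v|.

(* minimum weight of a TkRDF; the default #|T| * k is the weight of the
   constant-full function, which is a TkRDF whenever D has no isolated
   vertex, so this is the true minimum under the standing assumption *)
Definition gamma_trk : nat :=
  \big[minn/(#|T| * k)%N]_(f : {ffun T -> {set 'I_k}} | is_TkRDF f) weight f.

End Digraph.

(* A k-rainbow dominating function of weight w has either no empty label,
   so w >= n, or an empty label at some v, whose in-neighbours then carry
   all k colours, so w >= k; hence gamma_trk >= min(n, k), while a single
   colour on every vertex gives gamma_trk <= n.  If n > k and f is a minimum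
   TkRDF of weight k, the in-neighbours of any empty vertex already carry
   weight k, so the support X of f lies in the in-neighbourhood of every
   vertex outside X; X has at most k vertices, and at least two since D[X]
   has no isolated vertex.  Conversely, for such an X, labelling the vertices
   of X by the fibres of a map from the k colours onto X is a TkRDF of
   weight k. *)
From Pilot Require Import Defs.
From mathcomp Require Import all_boot.
Set Implicit Arguments. Unset Strict Implicit. Unset Printing Implicit Defensive.

Lemma bigmin_leq (I : eqType) (r : seq I) (P : pred I) (F : I -> nat) d x :
  x \in r -> P x -> \big[minn/d]_(i <- r | P i) F i <= F x.
Proof.
elim: r => // y r IHr; rewrite inE big_cons => /predU1P[<- -> | xr Px].
  exact: geq_minl.
have IHx := IHr xr Px; case: (P y) => //.
exact: leq_trans (geq_minr _ _) IHx.
Qed.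

Lemma card_bigcup_leq (I T : finType) (P : pred I) (F : I -> {set T}) :
  #|\bigcup_(i | P i) F i| <= \sum_(i | P i) #|F i|.
Proof.
elim/big_ind2: _ => [|m A n B /= leAm leBn|//]; first by rewrite cards0.
exact: leq_trans (leq_card_setU A B).1 (leq_add leAm leBn).
Qed.

Lemma induced_no_isolated_card (T : finType) (a : rel T) (S : {set T}) :
  irreflexive a -> induced_no_isolated a S -> S != set0 -> 1 < #|S|.
Proof.
move=> irr /forallP noisoS /set0Pn[u Su].
have /existsP[v /andP[Sv auv]] := implyP (noisoS u) Su.
apply/card_gt1P; exists u, v; split => //; apply: contraTneq auv => <-.
by rewrite irr.
Qed.

Lemma exists_onto_set (T : finType) (k : nat) (X : {set T}) :
  0 < #|X| -> #|X| <= k -> exists g : 'I_k -> T, g @: setT = X.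
Proof.
move=> /card_gt0P[x0 Xx0] leXk.
exists (fun i => nth x0 (enum X) i); apply/setP => v; apply/imsetP/idP.
  move=> [i _ ->]; have [ltiX|leXi] := ltnP i (size (enum X)).
    by rewrite -mem_enum mem_nth.
  by rewrite nth_default.
move=> Xv; have ltvk : index v (enum X) < k.
  by apply: leq_trans leXk; rewrite cardE index_mem mem_enum.
by exists (Ordinal ltvk); rewrite ?nth_index ?mem_enum.
Qed.

Section RainbowDomination.
Variables (T : finType) (a : rel T) (k : nat).
Implicit Types (f : {ffun T -> {set 'I_k}}) (v w : T).

(* Unqualified, [support] is MathComp's notation for the 0-support of a map. *)

Lemma weight_leq f : weight f <= #|T| * k.
Proof.
rewrite /weight -sum_nat_const; apply: leq_sum => v _.
by rewrite -[X in _ <= X]card_ord max_card.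
Qed.

Lemma card_support_leq f : #|Defs.support f| <= weight f.
Proof.
rewrite /weight -sum1_card [leqRHS](bigID (mem (Defs.support f))) /=.
by apply: leq_trans (leq_addr _ _); apply: leq_sum => v; rewrite inE card_gt0.
Qed.

Lemma kRDF_in_nbhd_weight f w :
  is_kRDF a f -> f w = set0 -> k <= \sum_(u in in_nbhd a w) #|f u|.
Proof.
move=> /forallP /(_ w) /implyP cover_w fw0.
rewrite -[leqLHS]card_ord -cardsT -(eqP (cover_w (introT eqP fw0))).
exact: card_bigcup_leq.
Qed.

Lemma kRDF_weight_geq f : is_kRDF a f -> minn #|T| k <= weight f.
Proof.
move=> kRDFf; have [/existsP[w /eqP fw0] | /existsPn nonempty] :=
  boolP [exists w, f w == set0].
  apply: leq_trans (geq_minr _ _) _.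
  apply: leq_trans (kRDF_in_nbhd_weight kRDFf fw0) _.
  by rewrite /weight [leqRHS](bigID (mem (in_nbhd a w))) leq_addr.
apply: leq_trans (geq_minl _ _) _; rewrite /weight -sum1_card.
by apply: leq_sum => v _; rewrite card_gt0 nonempty.
Qed.

Lemma gamma_trk_leq f : is_TkRDF a f -> gamma_trk a k <= weight f.
Proof. by move=> TkRDFf; apply: bigmin_leq; rewrite ?mem_index_enum. Qed.

Lemma gamma_trk_geq m :
  m <= #|T| * k -> (forall f, is_TkRDF a f -> m <= weight f) -> m <= gamma_trk a k.
Proof.
move=> le_m_default le_m_weight; rewrite /gamma_trk.
by elim/big_ind: _ => [|x y lemx lemy|f /le_m_weight]; rewrite ?leq_min ?lemx.
Qed.

Lemma gamma_trk_attained f0 :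
  is_TkRDF a f0 ->
  exists2 f : {ffun T -> {set 'I_k}}, is_TkRDF a f & weight f = gamma_trk a k.
Proof.
move=> TkRDFf0; have [g TkRDFg min_g] := arg_minnP (@weight T k) TkRDFf0.
exists g => //; apply/eqP; rewrite eqn_leq gamma_trk_geq ?gamma_trk_leq //.
  exact: weight_leq.
Qed.

Lemma gamma_trk_geq_min : minn #|T| k <= gamma_trk a k.
Proof.
apply: gamma_trk_geq => [|f /andP[kRDFf _]]; last exact: kRDF_weight_geq.
by case: k => [|k']; rewrite ?minn0 // (leq_trans (geq_minl _ _)) ?leq_pmulr.
Qed.

Lemma exists_TkRDF_weight_card :
  0 < k -> no_isolated a ->
  exists2 f : {ffun T -> {set 'I_k}}, is_TkRDF a f & weight f = #|T|.
Proof.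
move=> k_gt0 /forallP noiso.
set f : {ffun T -> {set 'I_k}} := [ffun=> [set Ordinal k_gt0]].
have card_f v : #|f v| = 1 by rewrite ffunE cards1.
exists f; last by rewrite /weight -sum1_card; apply: eq_bigr.
apply/andP; split.
  by apply/forallP => v; rewrite -cards_eq0 card_f.
have -> : Defs.support f = setT by apply/setP => v; rewrite !inE -card_gt0 card_f.
by apply/forallP => v; apply/implyP.
Qed.

Lemma weight_eq0 f : (weight f == 0) = (Defs.support f == set0).
Proof.
rewrite /weight sum_nat_eq0; apply/forallP/eqP => [f0 | supp0 v].
  by apply/setP => v; rewrite !inE -cards_eq0 (implyP (f0 v)).
by apply/implyP => _; move/setP/(_ v): supp0; rewrite !inE cards_eq0 => /negbFE.
Qed.

Lemma support_sub_in_nbhd f w :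
  is_kRDF a f -> weight f <= k -> f w = set0 -> Defs.support f \subset in_nbhd a w.
Proof.
move=> kRDFf le_fk fw0; have := leq_trans le_fk (kRDF_in_nbhd_weight kRDFf fw0).
rewrite /weight (bigID (mem (in_nbhd a w))) /= -[X in _ <= X]addn0 leq_add2l leqn0.
rewrite sum_nat_eq0 => /'forall_in_eqP outside0; apply/subsetP => u.
by rewrite !inE; apply: contraR => u_out; rewrite -cards_eq0 outside0 ?inE.
Qed.

Definition fibre_labelling (g : 'I_k -> T) : {ffun T -> {set 'I_k}} :=
  [ffun v => [set i | g i == v]].

Lemma support_fibre_labelling g : Defs.support (fibre_labelling g) = g @: setT.
Proof.
apply/setP => v; rewrite inE ffunE; apply/set0Pn/imsetP => [[i]|[i _ ->]].
  by rewrite inE => /eqP <-; exists i.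
by exists i; rewrite inE.
Qed.

Lemma weight_fibre_labelling g : weight (fibre_labelling g) = k.
Proof.
rewrite /weight -[RHS]card_ord -sum1_card (partition_big g predT) //=.
by apply: eq_bigr => v _; rewrite ffunE sum1dep_card.
Qed.

Lemma fibre_labelling_kRDF g :
  (forall v, v \notin g @: setT -> g @: setT \subset in_nbhd a v) ->
  is_kRDF a (fibre_labelling g).
Proof.
move=> dominated; apply/forallP => v; apply/implyP => fv0.
have /subsetP dom_v : g @: setT \subset in_nbhd a v.
  by apply: dominated; rewrite -support_fibre_labelling inE fv0.
apply/eqP/setP => i; rewrite inE; apply/bigcupP; exists (g i).
  by apply: dom_v; rewrite imset_f.
by rewrite ffunE inE.
Qed.

Lemma TkRDF_support_dominating f :
  irreflexive a -> 0 < k -> is_TkRDF a f -> weight f = k ->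
  let X := Defs.support f in
  [/\ 2 <= #|X| <= k, induced_no_isolated a X &
      forall v, v \in X -> ~: X \subset out_nbhd a v].
Proof.
move=> irr k_gt0 /andP[kRDFf nonisoX] wf X; split=> // [|v Xv].
  rewrite (leq_trans (card_support_leq f)) ?wf // andbT.
  rewrite (induced_no_isolated_card irr) //.
  by rewrite -weight_eq0 wf -lt0n.
apply/subsetP => x; rewrite !inE negbK => /eqP fx0.
have /subsetP/(_ v Xv) := support_sub_in_nbhd kRDFf (eq_leq wf) fx0.
by rewrite inE.
Qed.

Lemma dominating_set_TkRDF (X : {set T}) :
  0 < #|X| -> #|X| <= k -> induced_no_isolated a X ->
  (forall v, v \in X -> ~: X \subset out_nbhd a v) ->
  exists2 f : {ffun T -> {set 'I_k}}, is_TkRDF a f & weight f = k.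
Proof.
move=> X_gt0 /(exists_onto_set X_gt0)[g gX] nonisoX domX.
exists (fibre_labelling g); last exact: weight_fibre_labelling.
rewrite /is_TkRDF support_fibre_labelling gX nonisoX andbT.
apply: fibre_labelling_kRDF => v; rewrite gX => Xv; apply/subsetP => u Xu.
by have /subsetP/(_ v) := domX u Xu; rewrite !inE => /(_ Xv).
Qed.

End RainbowDomination.

Theorem theorem3p5 (T : finType) (a : rel T) (k : nat) :
  2 <= k -> irreflexive a -> no_isolated a ->
  (gamma_trk a k = k <->
   (#|T| = k \/
    (k.+1 <= #|T| /\
     exists X : {set T},
       [/\ 2 <= #|X| <= k, induced_no_isolated a X &
           forall v, v \in X -> ~: X \subset out_nbhd a v]))).
Proof.
move=> k_ge2 irr noiso; have k_gt0 : 0 < k by apply: ltnW.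
have [f0 TkRDFf0 wf0] := exists_TkRDF_weight_card k_gt0 noiso.
have gamma_le_n : gamma_trk a k <= #|T| by rewrite -wf0 gamma_trk_leq.
have gamma_ge_min := gamma_trk_geq_min a k.
split=> [gamma_k | [n_k | [lt_k_n [X [/andP[X_ge2 X_lek] nonisoX domX]]]]].
- have [n_k | n_neq_k] := eqVneq #|T| k; [by left | right].
  split; first by rewrite ltn_neqAle eq_sym n_neq_k -gamma_k.
  have [f TkRDFf wf] := gamma_trk_attained TkRDFf0.
  by exists (Defs.support f); apply: TkRDF_support_dominating; rewrite ?wf.
- move: gamma_le_n gamma_ge_min; rewrite n_k minnn => gamma_le_k k_le_gamma.
  by apply/eqP; rewrite eqn_leq gamma_le_k.
have [f TkRDFf wf] := dominating_set_TkRDF (ltnW X_ge2) X_lek nonisoX domX.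
apply/eqP; rewrite eqn_leq -[leqRHS]wf gamma_trk_leq //.
by apply: leq_trans _ gamma_ge_min; rewrite (minn_idPr (ltnW lt_k_n)).
Qed.
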